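(* Let $T$ be the $H_3(\mathbb R)$-odometer associated with a nested sequence $\Gamma_1\supset\Gamma_2\supset\cdots$ of lattices in $H_3(\mathbb R)$ such that each $\Gamma_n$ is normal in $\Gamma_1$. If $T$ is free, then $\bigcap_{n=1}^\infty p(\Gamma_n)=\{0\}$.
   Context: $H_3(\mathbb R)$: real $3\times3$ upper triangular unipotent matrices; for $g$ with $(1,2)$ entry $t_1$ and $(2,3)$ entry $t_2$, $p(g)=(t_1,t_2)\in\mathbb R^2$. A lattice is a discrete subgroup of finite covolume. The odometer is the left-translation action on $\varprojlim H_3(\mathbb R)/\Gamma_j$ with the inverse limit of the invariant probabilities. Free: a.e. point has trivial stability group. *)

From HB Require Import structures.
From mathcomp Require Import all_boot all_order all_algebra.
From mathcomp Require Import all_classical all_reals all_analysis.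
Import Order.TTheory GRing.Theory Num.Theory.
Import numFieldNormedType.Exports numFieldTopology.Exports.

Set Implicit Arguments.
Unset Strict Implicit.
Unset Printing Implicit Defensive.

Local Open Scope classical_set_scope.
Local Open Scope ring_scope.

(* The real Heisenberg group H_3(R): the unipotent upper triangular matrix
   [[1, a, c], [0, 1, b], [0, 0, 1]] is encoded by the triple ((a, b), c),
   i.e. a = (1,2) entry, b = (2,3) entry, c = (1,3) entry. *)
Definition H3 (R : realType) := (R * R * R)%type.

Section Heisenberg.
Variable R : realType.

Definition hmul (g h : H3 R) : H3 R :=
  (g.1.1 + h.1.1, g.1.2 + h.1.2, g.2 + h.2 + g.1.1 * h.1.2).
Definition hinv (g : H3 R) : H3 R :=
  (- g.1.1, - g.1.2, g.1.1 * g.1.2 - g.2).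
Definition hone : H3 R := (0, 0, 0).

Definition hp (g : H3 R) : R * R := (g.1.1, g.1.2).

Definition is_subgroup (G : set (H3 R)) :=
  [/\ G hone, (forall x y, G x -> G y -> G (hmul x y))
    & (forall x, G x -> G (hinv x))].

Definition discrete_subgroup (G : set (H3 R)) :=
  is_subgroup G /\ exists U : set (H3 R), nbhs hone U /\ G `&` U `<=` [set hone].

(* Haar measure of H_3(R): Lebesgue measure in the coordinates (a, b, c)
   (it is both left and right invariant). *)
Definition haar3 : set (H3 R) -> \bar R :=
  ((lebesgue_measure \x lebesgue_measure) \x (@lebesgue_measure R))%E.

Definition fundamental_domain (G F : set (H3 R)) :=
  measurable F /\
  forall g, exists! fy : H3 R * H3 R, [/\ F fy.1, G fy.2 & g = hmul fy.1 fy.2].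

Definition lattice (G : set (H3 R)) :=
  discrete_subgroup G /\
  exists F, fundamental_domain G F /\ (haar3 F < +oo)%E.

Definition normal_in (N G : set (H3 R)) :=
  forall g n, G g -> N n -> N (hmul (hmul g n) (hinv g)).

Definition lmul (g : H3 R) (A : set (H3 R)) : set (H3 R) := [set hmul g y | y in A].
Definition lcoset (g : H3 R) (G : set (H3 R)) : set (H3 R) := lmul g G.
Definition is_coset (G : set (H3 R)) (C : set (H3 R)) := exists g, C = lcoset g G.

(* Borel subsets of H_3(R)/G (quotient sigma-algebra): sets A of left cosets
   whose preimage under g |-> gG is Borel in H_3(R). *)
Definition quot_measurable (G : set (H3 R)) (A : set (set (H3 R))) :=
  A `<=` is_coset G /\ measurable [set g | A (lcoset g G)].

(* Odometer: points of lim H_3(R)/Gam_j are sequences (x_j) of left cosets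
   x_j in H_3(R)/Gam_j, compatible with the projections
   H_3(R)/Gam_{j+1} -> H_3(R)/Gam_j (i.e. x_{j+1} is contained in x_j). *)
Definition odo_pt (Gam : nat -> set (H3 R)) (x : nat -> set (H3 R)) :=
  (forall j, is_coset (Gam j) (x j)) /\ (forall j, x j.+1 `<=` x j).

Definition odo_cyl (Gam : nat -> set (H3 R)) (j : nat) (A : set (set (H3 R))) :
  set (nat -> set (H3 R)) := odo_pt Gam `&` [set x | A (x j)].

Definition odo_gen (Gam : nat -> set (H3 R)) : set (set (nat -> set (H3 R))) :=
  [set S | exists j A, quot_measurable (Gam j) A /\ S = odo_cyl Gam j A].

Definition odo_type (Gam : nat -> set (H3 R)) := g_sigma_algebraType (odo_gen Gam).

Definition odo_act (g : H3 R) (x : nat -> set (H3 R)) : nat -> set (H3 R) :=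
  fun j => lmul g (x j).

(* mu is the inverse limit of the invariant probabilities: a probability
   concentrated on the odometer whose marginal on each H_3(R)/Gam_j is
   invariant under left translation. *)
Definition odometer_measure (Gam : nat -> set (H3 R))
  (mu : probability (odo_type Gam) R) :=
  mu (odo_pt Gam) = 1%E /\
  forall j A g, quot_measurable (Gam j) A ->
    mu (odo_cyl Gam j A) = mu (odo_cyl Gam j [set lmul g C | C in A]).

Definition odo_free (Gam : nat -> set (H3 R)) (mu : probability (odo_type Gam) R) :=
  {ae mu, forall x : odo_type Gam, odo_pt Gam x ->
     forall g, odo_act g x = x -> g = hone}.

End Heisenberg.

From HB Require Import structures.
From mathcomp Require Import all_boot all_order all_algebra.
From mathcomp Require Import all_classical all_reals all_analysis.
From mathcomp Require Import measurable_realfun.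
From mathcomp Require Import ring lra.
Import Order.TTheory GRing.Theory Num.Theory.
Import numFieldNormedType.Exports numFieldTopology.Exports.
Set Implicit Arguments.
Unset Strict Implicit.
Unset Printing Implicit Defensive.

Local Open Scope classical_set_scope.
Local Open Scope ring_scope.

(* Let v be in every p(Gamma_n), say v = p(g_n) with g_n in Gamma_n, and let
   [hsymp v] be the symplectic pairing of v with p.  For d in Gamma_1 the
   commutator [d, g_n] is the central element [hsymp v d], and it lies in
   Gamma_n by normality.  If [hsymp v] is nonzero somewhere on Gamma_1, this
   gives a nontrivial central element common to all Gamma_n; it fixes every
   point of the odometer, contradicting freeness.  Otherwise [hsymp v] is
   constant on the cosets of Gamma_1, and if v <> 0 the slabs
   k <= hsymp v < k + 1 (k in Z) of H_3(R)/Gamma_1 are disjoint translates of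
   one another covering the quotient, which leaves no room for an invariant
   probability. *)

Section HeisenbergGroup.
Variable R : realType.
Implicit Types (g h k : H3 R) (v : R * R) (G : set (H3 R)).

Lemma hmulg1 g : hmul g (hone R) = g.
Proof. by case: g => [[x y] z]; rewrite /hmul /=; congr (_, _, _); ring. Qed.

Lemma hmulA g h k : hmul (hmul g h) k = hmul g (hmul h k).
Proof.
case: g h k => [[x y] z] [[x' y'] z'] [[x'' y''] z''].
by rewrite /hmul /=; congr (_, _, _); ring.
Qed.

Lemma hmulKVg g h : hmul g (hmul (hinv g) h) = h.
Proof.
case: g h => [[x y] z] [[x' y'] z'].
by rewrite /hmul /hinv /=; congr (_, _, _); ring.
Qed.

Definition hcenter (z : R) : H3 R := (0, 0, z).

Lemma hcenterC z g : hmul (hcenter z) g = hmul g (hcenter z).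
Proof. by case: g => [[x y] w]; rewrite /hmul /=; congr (_, _, _); ring. Qed.

Definition hsymp v g : R := g.1.1 * v.2 - v.1 * g.1.2.

Lemma hsympM v g h : hsymp v (hmul g h) = hsymp v g + hsymp v h.
Proof. by rewrite /hsymp /hmul /=; ring. Qed.

Definition hcomm g h : H3 R := hmul (hmul (hmul g h) (hinv g)) (hinv h).

Lemma hcommE d g : hcomm d g = hcenter (hsymp (hp g) d).
Proof.
case: d g => [[x y] z] [[x' y'] z'].
by rewrite /hcomm /hmul /hinv /hsymp /hcenter /=; congr (_, _, _); ring.
Qed.

Lemma hsymp_onto v s : v != (0, 0) -> exists g, hsymp v g = s.
Proof.
case: v => a b /= v0; have n0 : a ^+ 2 + b ^+ 2 != 0.
  apply: contra v0 => /eqP n0; apply/eqP; congr (_, _); nra.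
exists (s * b / (a ^+ 2 + b ^+ 2), - (s * a / (a ^+ 2 + b ^+ 2)), 0).
by rewrite /hsymp /=; field.
Qed.

Lemma measurable_hsymp v : measurable_fun setT (hsymp v).
Proof.
have m1 : measurable_fun setT (fun g : H3 R => g.1.1).
  exact: measurableT_comp measurable_fst measurable_fst.
have m2 : measurable_fun setT (fun g : H3 R => g.1.2).
  exact: measurableT_comp measurable_snd measurable_fst.
by apply: measurable_funB; apply: measurable_funM.
Qed.

Lemma lmul_lcoset g h G : lmul g (lcoset h G) = lcoset (hmul g h) G.
Proof.
apply/seteqP; split => x /=.
- by move=> [_ [y Gy <-] <-]; exists y => //; rewrite hmulA.
- move=> [y Gy <-]; exists (hmul h y); first by exists y.
  by rewrite hmulA.
Qed.

Lemma lcoset_id G g : is_subgroup G -> G g -> lcoset g G = G.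
Proof.
move=> [_ GM GV] Gg; apply/seteqP; split => x /=.
- by move=> [y Gy <-]; exact: GM.
- by move=> Gx; exists (hmul (hinv g) x); [exact: GM (GV _ Gg) Gx|exact: hmulKVg].
Qed.

Lemma lcoset_hsymp G v g h : G (hone R) -> (forall y, G y -> hsymp v y = 0) ->
  lcoset g G = lcoset h G -> hsymp v g = hsymp v h.
Proof.
move=> G1 Gv0 gh; have : lcoset g G h by rewrite gh; exists (hone R); rewrite ?hmulg1.
by move=> [y Gy <-]; rewrite hsympM (Gv0 y Gy) addr0.
Qed.

End HeisenbergGroup.

Lemma trivIset_eq_measure_eq0 d (T : measurableType d) (R : realType)
    (mu : probability T R) (F : nat -> set T) :
  (forall n, measurable (F n)) -> trivIset setT F ->
  (forall n, mu (F n) = mu (F 0%N)) -> mu (F 0%N) = 0%E.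
Proof.
move=> mF tF muF.
have bound N : (mu (F 0%N) *+ N <= 1)%E.
  have mU : measurable (\big[setU/set0]_(i < N) F i) by exact: bigsetU_measurable.
  have := probability_le1 mu mU; rewrite measure_bigsetU_ord //; last first.
    by move=> i j _ _ /(tF _ _ I I) /val_inj.
  by rewrite (eq_bigr (fun=> mu (F 0%N))) ?sumr_const ?card_ord // => i _; exact: muF.
have fin0 : mu (F 0%N) \is a fin_num.
  by rewrite ge0_fin_numE // (le_lt_trans (bound 1%N)) ?ltey.
move: bound; rewrite -(fineK fin0); set c := fine _ => bound.
have c0 : 0 <= c by rewrite -lee_fin fineK.
congr (_%:E); apply/eqP; rewrite eq_le c0 andbT leNgt; apply/negP => cgt0.
have := bound (Num.truncn c^-1).+1; rewrite -EFin_natmul lee_fin -mulr_natr.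
apply/negP; rewrite -ltNge -[X in X < _](mulfV (lt0r_neq0 cgt0)) ltr_pM2l //.
exact: truncnS_gt.
Qed.

Section Odometer.
Variables (R : realType) (Gam : nat -> set (H3 R)).

Lemma measurable_odo_cyl j A : quot_measurable (Gam j) A ->
  measurable (odo_cyl Gam j A : set (odo_type Gam)).
Proof. by move=> mA; apply: sub_sigma_algebra; exists j, A. Qed.

Lemma odo_pt_non_negligible (mu : probability (odo_type Gam) R) :
  odometer_measure mu -> ~ mu.-negligible (odo_pt Gam).
Proof.
have cylE : odo_pt Gam = odo_cyl Gam 0 (is_coset (Gam 0%N)).
  by apply/seteqP; split => [x ox|x []//]; split => //; exact: ox.1.
have mcyl : measurable (odo_cyl Gam 0 (is_coset (Gam 0%N)) : set (odo_type Gam)).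
  apply: measurable_odo_cyl; split => //.
  by rewrite [X in measurable X](_ : _ = setT) //; apply/seteqP; split => // g _; exists g.
move=> [mu1 _]; rewrite cylE in mu1 * => /(negligibleP _ mcyl) mu0.
by move: mu1; rewrite mu0 => -[] /eqP; rewrite eq_sym oner_eq0.
Qed.

Hypothesis Gam_subgroup : forall j, is_subgroup (Gam j).

Lemma odo_act_center z x : (forall j, Gam j (hcenter z)) -> odo_pt Gam x ->
  odo_act (hcenter z) x = x.
Proof.
move=> Gz [xcoset _]; apply: funext => j; rewrite /odo_act.
have [g ->] := xcoset j.
by rewrite lmul_lcoset hcenterC -lmul_lcoset lcoset_id.
Qed.

Lemma odo_free_center (mu : probability (odo_type Gam) R) z :
  odometer_measure mu -> odo_free mu -> (forall j, Gam j (hcenter z)) -> z = 0.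
Proof.
move=> mu_odo mu_free Gz; apply: contrapT => z0.
apply: (odo_pt_non_negligible mu_odo); apply: negligibleS mu_free => x ox /= x_free.
by have [] := x_free ox (hcenter z) (odo_act_center Gz ox).
Qed.

Section Slabs.
Variable v : R * R.
Hypothesis Gam0_hsymp : forall d, Gam 0%N d -> hsymp v d = 0.

Definition hslab (k : int) : set (set (H3 R)) :=
  [set lcoset g (Gam 0%N) | g in [set g | Num.floor (hsymp v g) = k]].

Lemma hslab_lcoset k g : hslab k (lcoset g (Gam 0%N)) <-> Num.floor (hsymp v g) = k.
Proof.
split=> [[h hk gh]|gk]; last by exists g.
have [G1 _ _] := Gam_subgroup 0.
by rewrite -(lcoset_hsymp G1 Gam0_hsymp gh).
Qed.

Lemma quot_measurable_hslab k : quot_measurable (Gam 0%N) (hslab k).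
Proof.
split; first by move=> _ [g _ <-]; exists g.
rewrite [X in measurable X](_ : _ = hsymp v @^-1` `[k%:~R, (k + 1)%:~R[).
  by rewrite -[X in measurable X]setTI; exact: measurable_hsymp.
apply/seteqP; split => g /=; rewrite hslab_lcoset in_itv /=.
  by move=> <-; exact: floor_itv.
by move=> gk; apply/eqP; rewrite floor_eq.
Qed.

Lemma lmul_hslab g k m : hsymp v g = m%:~R ->
  [set lmul g C | C in hslab k] = hslab (k + m).
Proof.
move=> gm; apply/seteqP; split => C /=.
- move=> [_ [h hk <-] <-]; rewrite lmul_lcoset hslab_lcoset.
  by rewrite hsympM gm addrC (floorDrz _ (intr_int _ m)) intrKfloor hk.
- move=> [h hkm <-]; exists (lcoset (hmul (hinv g) h) (Gam 0%N)).
    have hE : hsymp v h = hsymp v (hmul (hinv g) h) + m%:~R.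
      by rewrite -gm addrC -hsympM hmulKVg.
    rewrite hslab_lcoset -[k](addrK m) -hkm hE.
    by rewrite (floorDrz _ (intr_int _ m)) intrKfloor addrK.
  by rewrite lmul_lcoset hmulKVg.
Qed.

Let cyl (k : int) : set (odo_type Gam) := odo_cyl Gam 0 (hslab k).

Lemma odometer_measure_hsymp_eq0 (mu : probability (odo_type Gam) R) :
  odometer_measure mu -> v = (0, 0).
Proof.
move=> mu_odo; apply: contrapT => /eqP v0.
have mcyl k : measurable (cyl k).
  exact: measurable_odo_cyl (quot_measurable_hslab k).
have cyl_floor k x : cyl k x -> exists2 g, x 0%N = lcoset g (Gam 0%N) &
    Num.floor (hsymp v g) = k.
  by move=> [_ [g gk <-]]; exists g.
have mu_cyl k : mu (cyl k) = mu (cyl 0).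
  have [g gk] := hsymp_onto k%:~R v0.
  have [_ mu_inv] := mu_odo.
  by rewrite /cyl (mu_inv _ _ g (quot_measurable_hslab 0)) (lmul_hslab _ gk) add0r.
have mu_cyl0 : mu (cyl 0) = 0%E.
  apply: (trivIset_eq_measure_eq0 (F := fun n : nat => cyl n)) => //.
  move=> i j _ _ [x [/cyl_floor[g xg gi] /cyl_floor[h xh hj]]].
  have [G1 _ _] := Gam_subgroup 0.
  by move: gi; rewrite (lcoset_hsymp G1 Gam0_hsymp (etrans (esym xg) xh)) hj => -[].
have cyl_null k : mu.-negligible (cyl k).
  by apply/(negligibleP _ (mcyl k)); rewrite -mu_cyl0; exact: mu_cyl.
apply: (odo_pt_non_negligible mu_odo).
apply: negligibleS (negligibleU (negligible_bigcup (fun n => cyl_null (Posz n)))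
  (negligible_bigcup (fun n => cyl_null (Negz n)))) => x ox.
have [g x0g] := ox.1 0%N.
have : cyl (Num.floor (hsymp v g)) x by split => //=; rewrite x0g hslab_lcoset.
by case: (Num.floor _) => n xn; [left|right]; exists n.
Qed.

End Slabs.

End Odometer.

Theorem proposition3p4 (R : realType) (Gam : nat -> set (H3 R))
  (Hlat : forall n, lattice (Gam n))
  (Hnest : forall n, Gam n.+1 `<=` Gam n)
  (Hnorm : forall n, normal_in (Gam n) (Gam 0%N)) :
  (exists mu : probability (odo_type Gam) R,
      odometer_measure mu /\ odo_free mu) ->
  \bigcap_n [set hp g | g in Gam n] = [set ((0 : R), (0 : R))].
Proof.
move=> [mu [mu_odo mu_free]].
have Gam_subgroup n : is_subgroup (Gam n) by case: (Hlat n) => [[]].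
apply/seteqP; split => [v vGam|_ ->]; last first.
  by move=> n _; exists (hone R) => //; case: (Gam_subgroup n).
have [[d Gd dv]|no_d] := pselect (exists2 d, Gam 0%N d & hsymp v d != 0).
- have Gam_center n : Gam n (hcenter (hsymp v d)).
    have [g Gg <-] := vGam n I; have [_ GM GV] := Gam_subgroup n.
    by rewrite -hcommE; apply: GM (GV _ Gg); exact: Hnorm.
  by move: dv; rewrite (odo_free_center Gam_subgroup mu_odo mu_free Gam_center) eqxx.
- apply: (odometer_measure_hsymp_eq0 Gam_subgroup _ mu_odo) => d Gd.
  by apply: contrapT => /eqP dv; apply: no_d; exists d.
Qed.
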